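(* Assume that for every company $i\in\mathcal C$, every vehicle of company $i$ can reach at least one station and $\overline{\mathcal K}_i\ne\emptyset$. Under the system optimal pricing policies $p_i$, every Nash equilibrium $x^*$ of the game $G$ satisfies $$x^*\in\arg\min_{x\in\overline{\mathcal K}}J_G(\sigma(x)),\qquad J_G(\sigma)=\tfrac12\sigma^TA_G\sigma+b_G^T\sigma .$$
   Context: Setting: $\mathcal C$ is a finite nonempty set of companies; $\mathcal M$ is a finite set of charging stations with $m=|\mathcal M|\ge2$. Company $i$ owns a finite set $\mathcal V_i$ of vehicles, $N_i=|\mathcal V_i|\ge1$, and $\mathcal F^i_j\subseteq\mathcal V_i$ is the set of its vehicles that can reach station $j$. $\mathcal P_{\mathcal M}=\{x\in\mathbb R_{\ge0}^{\mathcal M}:\sum_j x_j=1\}$. For each $i$, $\overline{\mathcal K}_i$ is the set of $x^i\in\mathcal P_{\mathcal M}$ such that for every proper subset $S\subsetneq\mathcal M$: $N_i\sum_{j\in S}x^i_j\le\max\{0,|\bigcup_{j\in S}\mathcal F^i_j|-|S|\}$. Let $\overline{\mathcal K}=\prod_{i\in\mathcal C}\overline{\mathcal K}_i$; for $x=(x^i)_{i\in\mathcal C}\in\overline{\mathcal K}$ write $x^{-i}=(x^j)_{j\ne i}$, $\sigma(x)=\sum_{i}N_ix^i$, $\sigma(x^{-i})=\sum_{j\neq i}N_jx^j$. Data: $A_G\in\mathbb R^{\mathcal M\times\mathcal M}$ diagonal positive definite, $b_G\in\mathbb R^{\mathcal M}$; for each $i$, diagonal matrices $A_i,B_i\in\mathbb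 R^{\mathcal M\times\mathcal M}$, vectors $c_i,f_i\in\mathbb R^{\mathcal M}$, and a diagonal positive semidefinite $D_i$ with $(D_i)_{jj}>0$ whenever $\mathcal F^i_j\neq\emptyset$. For a diagonal matrix $D$, $D^*$ is the diagonal matrix with $D^*_{jj}=1/D_{jj}$ if $D_{jj}\ne0$ and $0$ otherwise. System optimal pricing policies: $p_i(x^i,x^{-i})=D_i^*\big[\tfrac12\overline A_ix^i+\overline B_i\sigma(x^{-i})+\Delta_i\big]$ with $\overline A_i=N_i^2A_G-A_i$, $\overline B_i=N_iA_G-B_i$, $\Delta_i=N_ib_G-c_i-f_i$. Company cost: $J^i(x^i,x^{-i})=\tfrac12(x^i)^TA_ix^i+(x^i)^TB_i\sigma(x^{-i})+c_i^Tx^i+(x^i)^TD_ip_i(x^i,x^{-i})+f_i^Tx^i$. Game $G$: each company $i$ chooses $x^i\in\overline{\mathcal K}_i$ to minimize $J^i(x^i,x^{-i})$. A Nash equilibrium is $x^*\in\overline{\mathcal K}$ with $J^i(x^{*i},x^{*-i})\le J^i(y^i,x^{*-i})$ for all $y^i\in\overline{\mathcal K}_i$ and all $i\in\mathcal C$. *)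

(* Stations are 'I_m, vectors are column vectors 'cV[R]_m,
   matrices are 'M[R]_m. *)
From mathcomp Require Import all_boot all_order all_algebra.
Set Implicit Arguments. Unset Strict Implicit. Unset Printing Implicit Defensive.
Import Order.TTheory GRing.Theory Num.Theory.
Local Open Scope ring_scope.

Section Defs.
Variable R : realFieldType.
Variable m : nat.

Definition dotv (u v : 'cV[R]_m) : R := (u^T *m v) 0 0.

Definition qform (u : 'cV[R]_m) (A : 'M[R]_m) (v : 'cV[R]_m) : R :=
  (u^T *m A *m v) 0 0.

Definition diag_pinv (D : 'M[R]_m) : 'M[R]_m :=
  \matrix_(j, k) (if j == k then (if D j j != 0 then (D j j)^-1 else 0) else 0).

Definition in_simplex (x : 'cV[R]_m) : Prop :=
  (forall j, 0 <= x j 0) /\ \sum_j x j 0 = 1.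

Variable C : finType.
Variable V : C -> finType.           (* vehicles of company i *)
Definition Nv (i : C) : nat := #|V i|.

Variable F : forall i : C, 'I_m -> {set V i}.

Definition inK (i : C) (x : 'cV[R]_m) : Prop :=
  in_simplex x /\
  forall S : {set 'I_m}, S != setT ->
    (Nv i)%:R * (\sum_(j in S) x j 0)
      <= Num.max 0 (#|\bigcup_(j in S) F i j|%:R - #|S|%:R).

Definition inKbar (x : C -> 'cV[R]_m) : Prop := forall i, inK i (x i).

Definition sigma (x : C -> 'cV[R]_m) : 'cV[R]_m :=
  \sum_i (Nv i)%:R *: x i.
Definition sigma_minus (x : C -> 'cV[R]_m) (i : C) : 'cV[R]_m :=
  \sum_(k | k != i) (Nv k)%:R *: x k.

Variables (AG : 'M[R]_m) (bG : 'cV[R]_m).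
Variables (A B D : C -> 'M[R]_m) (c f : C -> 'cV[R]_m).

Definition Abar (i : C) : 'M[R]_m := ((Nv i)%:R ^+ 2) *: AG - A i.
Definition Bbar (i : C) : 'M[R]_m := (Nv i)%:R *: AG - B i.
Definition Delta (i : C) : 'cV[R]_m := (Nv i)%:R *: bG - c i - f i.

(* system optimal pricing policy p_i(x^i, x^{-i}); it depends on x^{-i}
   only through s = sigma(x^{-i}) *)
Definition price (i : C) (xi s : 'cV[R]_m) : 'cV[R]_m :=
  diag_pinv (D i) *m ((2^-1) *: (Abar i *m xi) + Bbar i *m s + Delta i).

(* company cost J^i(x^i, x^{-i}) with s = sigma(x^{-i}) *)
Definition Jcomp (i : C) (xi s : 'cV[R]_m) : R :=
  2^-1 * qform xi (A i) xi + qform xi (B i) s + dotv (c i) xi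
  + qform xi (D i) (price i xi s) + dotv (f i) xi.

Definition nash_eq (x : C -> 'cV[R]_m) : Prop :=
  inKbar x /\
  forall i (y : 'cV[R]_m), inK i y ->
    Jcomp i (x i) (sigma_minus x i) <= Jcomp i y (sigma_minus x i).

Definition JG (s : 'cV[R]_m) : R := 2^-1 * qform s AG s + dotv bG s.

End Defs.

(* With the system optimal prices the cost of company i on its feasible set is
   J^i(z, s) = J_G(N_i z + s) - J_G(s), where s = sigma(x^{-i}): on a station that
   no vehicle of i can reach the price is not defined, but every feasible z puts
   no mass there.  Hence G is a potential game with the convex potential J_G(sigma).
   At a Nash equilibrium x each x^i minimizes this potential over the convex set
   K_i, so the directional derivative of J_G at sigma(x) towards N_i (y^i - x^i) is
   nonnegative; summing over i gives a nonnegative derivative towards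
   sigma(y) - sigma(x), and convexity of J_G yields J_G(sigma(x)) <= J_G(sigma(y)). *)
From mathcomp Require Import all_boot all_order all_algebra.
From mathcomp Require Import ring lra.
Import Order.TTheory GRing.Theory Num.Theory.
Local Open Scope ring_scope.
Set Implicit Arguments. Unset Strict Implicit.

Lemma ge0_perturbation (R : realFieldType) (L q : R) : 0 <= q ->
  (forall t, 0 < t <= 1 -> 0 <= L + t * q) -> 0 <= L.
Proof.
move=> q_ge0 small_t; case: (lerP 0 L) => // L_lt0.
have qL_gt0 : 0 < q - L by lra.
have Ht : 0 < - L / (q - L) <= 1.
  apply/andP; split; first by apply: divr_gt0; lra.
  by rewrite ler_pdivrMr // mul1r; lra.
have := small_t _ Ht.
have -> : L + - L / (q - L) * q = (L * (q - L) - L * q) / (q - L).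
  by field; rewrite lt0r_neq0.
by rewrite pmulr_lge0 ?invr_gt0 //; nra.
Qed.

Section DiagonalQuadratic.
Variables (R : realFieldType) (m : nat).

Lemma mulmx_diag_col (M : 'M[R]_m) (v : 'cV[R]_m) j :
  is_diag_mx M -> (M *m v) j 0 = M j j * v j 0.
Proof.
move/is_diag_mxP=> Mdiag; rewrite mxE (bigD1 j) //= big1 ?addr0 // => k Hk.
by rewrite Mdiag ?mul0r // eq_sym.
Qed.

Lemma sum_diag_row (M : 'M[R]_m) (v : 'cV[R]_m) j :
  is_diag_mx M -> \sum_k M j k * v k 0 = M j j * v j 0.
Proof. by move=> Mdiag; rewrite -mulmx_diag_col // mxE. Qed.

Lemma qform_diag (u v : 'cV[R]_m) (M : 'M[R]_m) :
  is_diag_mx M -> qform u M v = \sum_j u j 0 * M j j * v j 0.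
Proof.
move=> Mdiag; rewrite /qform -mulmxA mxE; apply: eq_bigr => j _.
by rewrite mulmx_diag_col // !mxE mulrA.
Qed.

Lemma dotvE (u v : 'cV[R]_m) : dotv u v = \sum_j u j 0 * v j 0.
Proof. by rewrite /dotv mxE; apply: eq_bigr => j _; rewrite mxE. Qed.

Lemma diag_pinv_is_diag (M : 'M[R]_m) : is_diag_mx (diag_pinv M).
Proof.
apply/is_diag_mxP => j k jk; rewrite mxE.
by case: ifP jk => // /eqP ->; rewrite eqxx.
Qed.

Variables (AG : 'M[R]_m) (bG : 'cV[R]_m).
Hypothesis AG_diag : is_diag_mx AG.

Lemma JG_diag s : JG AG bG s = \sum_j (2^-1 * AG j j * s j 0 ^+ 2 + bG j 0 * s j 0).
Proof.
rewrite /JG qform_diag // dotvE mulr_sumr -big_split /=.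
by apply: eq_bigr => j _; ring.
Qed.

Definition gradJG (s d : 'cV[R]_m) : R := \sum_j (AG j j * s j 0 + bG j 0) * d j 0.
Definition curvJG (d : 'cV[R]_m) : R := \sum_j AG j j * d j 0 ^+ 2.

Lemma JGD s d : JG AG bG (s + d) = JG AG bG s + gradJG s d + 2^-1 * curvJG d.
Proof.
rewrite !JG_diag /gradJG /curvJG mulr_sumr -!big_split /=.
by apply: eq_bigr => j _; rewrite !mxE; field.
Qed.

Lemma gradJG_sum (I : finType) s (d : I -> 'cV[R]_m) :
  gradJG s (\sum_i d i) = \sum_i gradJG s (d i).
Proof.
rewrite /gradJG exchange_big /=; apply: eq_bigr => j _.
by rewrite summxE mulr_sumr.
Qed.

Lemma curvJGZ k d : curvJG (k *: d) = k ^+ 2 * curvJG d.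
Proof. by rewrite /curvJG mulr_sumr; apply: eq_bigr => j _; rewrite !mxE; ring. Qed.

Hypothesis AG_pos : forall j, 0 < AG j j.

Lemma curvJG_ge0 d : 0 <= curvJG d.
Proof. by apply: sumr_ge0 => j _; rewrite mulr_ge0 ?sqr_ge0 // ltW. Qed.

Lemma JG_le_of_gradJG_ge0 s d : 0 <= gradJG s d -> JG AG bG s <= JG AG bG (s + d).
Proof. by move=> grad_ge0; rewrite JGD; have := curvJG_ge0 d; lra. Qed.

Lemma gradJG_ge0_of_local_min s d :
  (forall t, 0 < t <= 1 -> JG AG bG s <= JG AG bG (s + t *: d)) -> 0 <= gradJG s d.
Proof.
move=> local_min; apply: (@ge0_perturbation _ _ (2^-1 * curvJG d)).
  by rewrite mulr_ge0 ?curvJG_ge0 // invr_ge0 ler0n.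
move=> t /andP[t_gt0 t_le1]; rewrite -(pmulr_rge0 _ t_gt0).
have := local_min t; rewrite t_gt0 t_le1 JGD curvJGZ.
suff -> : gradJG s (t *: d) = t * gradJG s d by move=> /(_ isT); nra.
by rewrite /gradJG mulr_sumr; apply: eq_bigr => j _; rewrite !mxE; ring.
Qed.

End DiagonalQuadratic.

Section FeasibleSets.
Variables (R : realFieldType) (m : nat) (C : finType) (V : C -> finType).
Variable F : forall i : C, 'I_m -> {set V i}.

Lemma inK_convex i (a b : 'cV[R]_m) t :
  inK F i a -> inK F i b -> 0 <= t <= 1 -> inK F i (a + t *: (b - a)).
Proof.
move=> [[a_ge0 a_sum] a_cap] [[b_ge0 b_sum] b_cap] /andP[t_ge0 t_le1].
have sumE (P : pred 'I_m) : \sum_(j | P j) (a + t *: (b - a)) j 0 =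
    \sum_(j | P j) a j 0 + t * (\sum_(j | P j) b j 0 - \sum_(j | P j) a j 0).
  rewrite -sumrB mulr_sumr -big_split /=.
  by apply: eq_bigr => j _; rewrite !mxE.
split; first split.
- by move=> j; rewrite !mxE; have := a_ge0 j; have := b_ge0 j; nra.
- by rewrite sumE a_sum b_sum subrr mulr0 addr0.
- move=> S S_proper; rewrite sumE.
  have := a_cap S S_proper; have := b_cap S S_proper.
  have : 0 <= (Nv V i)%:R :> R by [].
  set M := Num.max _ _; set sa := \sum_(j in S) a j 0; set sb := \sum_(j in S) b j 0.
  nra.
Qed.

(* The capacity constraint for S = {j} reads N_i z_j <= max(0, 0 - 1) = 0. *)
Lemma inK_unreachable i j (z : 'cV[R]_m) :
  (2 <= m)%N -> (1 <= Nv V i)%N -> F i j = set0 -> inK F i z -> z j 0 = 0.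
Proof.
move=> m_ge2 N_ge1 Fij0 [[z_ge0 _] z_cap].
have j_proper : [set j] != setT.
  by apply: contraTneq m_ge2 => jT; rewrite -(card_ord m) -cardsT -jT cards1.
have := z_cap _ j_proper; rewrite !big_set1 Fij0 cards0 cards1 sub0r.
rewrite (max_idPl _) ?oppr_le0 ?ler01 // => Nz_le0.
have : (1 : R) <= (Nv V i)%:R by rewrite ler1n.
by have := z_ge0 j; nra.
Qed.

End FeasibleSets.

Section PotentialGame.
Variables (R : realFieldType) (m : nat) (C : finType) (V : C -> finType).
Variables (F : forall i : C, 'I_m -> {set V i}) (AG : 'M[R]_m) (bG : 'cV[R]_m).
Variables (A B D : C -> 'M[R]_m) (c f : C -> 'cV[R]_m).
Hypotheses (m_ge2 : (2 <= m)%N) (N_ge1 : forall i, (1 <= Nv V i)%N).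
Hypotheses (AG_diag : is_diag_mx AG) (A_diag : forall i, is_diag_mx (A i)).
Hypotheses (B_diag : forall i, is_diag_mx (B i)) (D_diag : forall i, is_diag_mx (D i)).
Hypothesis D_pos : forall i j, F i j != set0 -> 0 < D i j j.

Lemma Jcomp_potential i (z s : 'cV[R]_m) : inK F i z ->
  Jcomp V AG bG A B D c f i z s = JG AG bG ((Nv V i)%:R *: z + s) - JG AG bG s.
Proof.
move=> z_feas.
have diag_sub (k : R) (M1 M2 : 'M[R]_m) :
    is_diag_mx M1 -> is_diag_mx M2 -> is_diag_mx (k *: M1 - M2).
  move=> /is_diag_mxP M1d /is_diag_mxP M2d.
  by apply/is_diag_mxP => a b ab; rewrite !mxE M1d // M2d // mulr0 subr0.
have Abar_diag : is_diag_mx (Abar V AG A i) := diag_sub _ _ _ AG_diag (A_diag i).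
have Bbar_diag : is_diag_mx (Bbar V AG B i) := diag_sub _ _ _ AG_diag (B_diag i).
rewrite /Jcomp !qform_diag // !dotvE !JG_diag // -sumrB mulr_sumr -!big_split /=.
apply: eq_bigr => j _.
rewrite /price mulmx_diag_col ?diag_pinv_is_diag // !mxE !sum_diag_row //.
rewrite !mxE eqxx.
have [Dj0 | Dj_neq0] := eqVneq (D i j j) 0; last by rewrite /=; field.
have Fij0 : F i j = set0.
  by apply/eqP; apply: contraT => /D_pos; rewrite Dj0 ltxx.
by rewrite (inK_unreachable m_ge2 (N_ge1 i) Fij0 z_feas) Dj0; ring.
Qed.

Hypothesis AG_pos : forall j, 0 < AG j j.

Lemma nash_eq_gradJG_ge0 (x y : C -> 'cV[R]_m) i :
  nash_eq F AG bG A B D c f x -> inK F i (y i) ->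
  0 <= gradJG AG bG (sigma V x) ((Nv V i)%:R *: (y i - x i)).
Proof.
move=> [x_feas x_best] yi_feas.
apply: gradJG_ge0_of_local_min => // t /andP[t_gt0 t_le1].
have t01 : 0 <= t <= 1 by rewrite ltW.
have zt_feas := inK_convex (x_feas i) yi_feas t01.
have := x_best i _ zt_feas; rewrite !Jcomp_potential // lerD2r.
have sigma_split : sigma V x = (Nv V i)%:R *: x i + sigma_minus V x i.
  by rewrite /sigma /sigma_minus (bigD1 i).
rewrite sigma_split.
suff -> : (Nv V i)%:R *: x i + sigma_minus V x i + t *: ((Nv V i)%:R *: (y i - x i))
    = (Nv V i)%:R *: (x i + t *: (y i - x i)) + sigma_minus V x i by [].
by apply/matrixP => a b; rewrite !mxE; ring.
Qed.

End PotentialGame.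
Unset Implicit Arguments. Set Strict Implicit.

Theorem theorem2 (R : realFieldType) (m : nat) (C : finType) (V : C -> finType)
  (F : forall i : C, 'I_m -> {set V i})
  (AG : 'M[R]_m) (bG : 'cV[R]_m)
  (A B D : C -> 'M[R]_m) (c f : C -> 'cV[R]_m)
  (Hm : (2 <= m)%N)
  (HC : (0 < #|C|)%N)
  (HN : forall i, (1 <= Nv V i)%N)
  (HAGd : is_diag_mx AG) (HAGpd : forall j, 0 < AG j j)
  (HAd : forall i, is_diag_mx (A i)) (HBd : forall i, is_diag_mx (B i))
  (HDd : forall i, is_diag_mx (D i)) (HDpsd : forall i j, 0 <= D i j j)
  (HDpos : forall i j, F i j != set0 -> 0 < D i j j)
  (Hreach : forall i (v : V i), exists j, v \in F i j)
  (HKne : forall i, exists x : 'cV[R]_m, inK F i x)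
  (xs : C -> 'cV[R]_m)
  (HNE : nash_eq F AG bG A B D c f xs) :
  inKbar (R:=R) F xs /\
  forall y : C -> 'cV[R]_m, inKbar (R:=R) F y -> JG AG bG (sigma V xs) <= JG AG bG (sigma V y).
Proof.
split=> [|y y_feas]; first by case: HNE.
have sigma_y : sigma V y = sigma V xs + \sum_i (Nv V i)%:R *: (y i - xs i).
  apply/matrixP => a b; rewrite /sigma mxE !summxE -big_split /=.
  by apply: eq_bigr => i _; rewrite !mxE; ring.
rewrite sigma_y; apply: JG_le_of_gradJG_ge0 => //.
rewrite gradJG_sum; apply: sumr_ge0 => i _.
exact: (nash_eq_gradJG_ge0 Hm HN HAGd HAd HBd HDd HDpos HAGpd HNE (y_feas i)).
Qed.
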